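(* Let $G$ be a locally compact group, $H\subset G$ a discrete subset and $U$ a measurable relatively compact neighbourhood of the identity such that $\{xU\}_{x\in H}$ is a partition of $G$ and $hUh^{-1}=U$ for all $h\in H$. Then there is $n\in\mathbb{N}$ such that for every $l\in H$ the approximate block diagonal determined by $l$ meets at most $n$ band diagonals (determined by elements of $H$), and conversely for every $k\in H$ the band diagonal determined by $k$ meets at most $n$ approximate block diagonals (and hence can be covered by these).
   Context: For $k\in H$, the band diagonal determined by $k$ is $\{(x,y)\in G\times G: xy^{-1}\in kU\}$, and the approximate block diagonal determined by $k$ is $\bigcup\{iU\times jU: i,j\in H,\ ij^{-1}\in kU\}$. *)

From mathcomp Require Import all_boot all_order all_algebra.
From mathcomp Require Import all_classical all_reals all_analysis.
Set Implicit Arguments. Unset Strict Implicit. Unset Printing Implicit Defensive.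
Local Open Scope classical_set_scope.

Definition is_topological_group (G : topologicalType)
  (mul : G -> G -> G) (inv : G -> G) (one : G) : Prop :=
  [/\ (forall x y z, mul x (mul y z) = mul (mul x y) z),
      (forall x, mul one x = x /\ mul x one = x),
      (forall x, mul (inv x) x = one /\ mul x (inv x) = one),
      continuous (fun p : G * G => mul p.1 p.2) &
      continuous inv].

Definition is_locally_compact_group (G : topologicalType)
  (mul : G -> G -> G) (inv : G -> G) (one : G) : Prop :=
  [/\ is_topological_group mul inv one, hausdorff_space G &
      locally_compact [set: G]].

Definition borel_measurable (G : topologicalType) (A : set G) : Prop :=
  <<s (@open G) >> A.

Definition relatively_compact (G : topologicalType) (A : set G) : Prop :=
  compact (closure A).

Definition discrete_subset (G : topologicalType) (H : set G) : Prop :=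
  forall h, H h -> exists2 V, nbhs h V & (forall y, V y -> H y -> y = h).

Definition ltrans (G : Type) (mul : G -> G -> G) (x : G) (U : set G) : set G :=
  [set mul x u | u in U].

Definition coset_partition (G : Type) (mul : G -> G -> G)
  (H U : set G) : Prop :=
  forall g : G, exists! x, H x /\ ltrans mul x U g.

Definition band_diag (G : Type) (mul : G -> G -> G) (inv : G -> G)
  (U : set G) (k : G) : set (G * G) :=
  [set p | ltrans mul k U (mul p.1 (inv p.2))].

Definition approx_block_diag (G : Type) (mul : G -> G -> G) (inv : G -> G)
  (H U : set G) (k : G) : set (G * G) :=
  [set p | exists i j, [/\ H i, H j, ltrans mul k U (mul i (inv j)),
                          ltrans mul i U p.1 & ltrans mul j U p.2]].

From HB Require Import structures.
From mathcomp Require Import all_boot all_order all_algebra.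
From mathcomp Require Import all_classical all_reals all_analysis.
From mathcomp Require Import finmap.
Set Implicit Arguments. Unset Strict Implicit. Unset Printing Implicit Defensive.
Local Open Scope classical_set_scope.

(* If the approximate block diagonal of l meets the band diagonal of k, then
   k lies in l W and l lies in k W, where W = U U U^-1 U^-1; this is where
   h U h^-1 = U for h in H is used.  W lies in the compact set K K K^-1 K^-1,
   K the closure of U, which is covered by finitely many open sets A with
   A^-1 A contained in U.  Two distinct points of H never lie in a common
   translate c A, because the cosets h U are disjoint; so every translate c W
   contains at most as many points of H as there are sets in the cover, a
   bound that does not depend on c. *)

Definition is_group (T : Type) (mul : T -> T -> T) (inv : T -> T) (one : T)
    : Prop :=
  [/\ forall x y z, mul x (mul y z) = mul (mul x y) z,
      forall x, mul one x = x /\ mul x one = x &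
      forall x, mul (inv x) x = one /\ mul x (inv x) = one].

Lemma topological_group_is_group (G : topologicalType)
    (mul : G -> G -> G) (inv : G -> G) (one : G) :
  is_topological_group mul inv one -> is_group mul inv one.
Proof. by case. Qed.

Section GroupIdentities.
Variables (T : Type) (mul : T -> T -> T) (inv : T -> T) (one : T).
Hypothesis hT : is_group mul inv one.

Lemma mulgA x y z : mul x (mul y z) = mul (mul x y) z.
Proof. by case: hT. Qed.
Let mul1g x : mul one x = x. Proof. by case: hT => _ /(_ x) []. Qed.
Lemma mulg1 x : mul x one = x. Proof. by case: hT => _ /(_ x) []. Qed.
Let mulVg x : mul (inv x) x = one. Proof. by case: hT => _ _ /(_ x) []. Qed.
Let mulgV x : mul x (inv x) = one. Proof. by case: hT => _ _ /(_ x) []. Qed.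

Lemma mulgK a b : mul (mul a b) (inv b) = a.
Proof. by rewrite -mulgA mulgV mulg1. Qed.

Lemma mulgKV a b : mul (mul a (inv b)) b = a.
Proof. by rewrite -mulgA mulVg mulg1. Qed.

Lemma mulKg a b : mul (inv a) (mul a b) = b.
Proof. by rewrite mulgA mulVg mul1g. Qed.

Lemma mulKVg a b : mul a (mul (inv a) b) = b.
Proof. by rewrite mulgA mulgV mul1g. Qed.

Lemma invgK a : inv (inv a) = a.
Proof. by rewrite -[LHS]mulg1 -(mulVg a) mulKg. Qed.

Lemma invMg a b : inv (mul a b) = mul (inv b) (inv a).
Proof.
have e : mul (mul a b) (mul (inv b) (inv a)) = one by rewrite mulgA mulgK mulgV.
by rewrite -[LHS]mulg1 -e mulKg.
Qed.

Definition conjg_by (j u : T) : T := mul (mul j u) (inv j).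

Lemma mul_invE i u j v :
  mul (mul i u) (inv (mul j v)) =
  mul (mul (mul i (inv j)) (conjg_by j u)) (inv (conjg_by j v)).
Proof.
by rewrite /conjg_by !invMg invgK -!mulgA mulKg !mulgA mulgKV.
Qed.

End GroupIdentities.

(* The library characterizes compactness by open covers only on pointed
   spaces; this alias points a space at a chosen element. *)
Definition pointed_at {T : Type} (x : T) : Type := T.
HB.instance Definition _ (G : topologicalType) (x : G) :=
  Topological.on (pointed_at x).
HB.instance Definition _ (G : topologicalType) (x : G) :=
  isPointed.Build (pointed_at x) x.

Section TopologicalGroup.
Variables (G : topologicalType) (mul : G -> G -> G) (inv : G -> G) (one : G).
Hypothesis hG : is_topological_group mul inv one.

Let hgrp : is_group mul inv one := topological_group_is_group hG.

Definition setmul (A B : set G) : set G := [set mul a b | a in A & b in B].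

Definition setinv (A : set G) : set G := inv @` A.

Lemma compact_setmul A B : compact A -> compact B -> compact (setmul A B).
Proof.
move=> cA cB; rewrite /setmul image2E.
apply: continuous_compact (compact_setX cA cB); apply: continuous_subspaceT.
have -> : uncurry mul = (fun p => mul p.1 p.2) by apply/funext => -[].
by case: hG.
Qed.

Lemma compact_setinv A : compact A -> compact (setinv A).
Proof.
by move=> cA; apply: continuous_compact cA; apply: continuous_subspaceT; case: hG.
Qed.

Definition mul2div2 (A : set G) : set G :=
  setmul (setmul (setmul A A) (setinv A)) (setinv A).

Lemma mem_mul2div2 A a b d e : A a -> A b -> A d -> A e ->
  mul2div2 A (mul (mul (mul a b) (inv d)) (inv e)).
Proof.
move=> Aa Ab Ad Ae.
exists (mul (mul a b) (inv d)); last by exists (inv e) => //; exists e.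
exists (mul a b); last by exists (inv d) => //; exists d.
by exists a => //; exists b.
Qed.

Lemma mul2div2S A B : A `<=` B -> mul2div2 A `<=` mul2div2 B.
Proof.
move=> AB; have AVB : setinv A `<=` setinv B by exact: image_subset.
by do !apply: image2_subset.
Qed.

Lemma compact_mul2div2 A : compact A -> compact (mul2div2 A).
Proof.
move=> cA; have cAV := compact_setinv cA.
by do !apply: compact_setmul.
Qed.

Definition small_for (U A : set G) : Prop :=
  forall a b, A a -> A b -> U (mul (inv a) b).

Lemma small_open_nbhs U x :
  nbhs one U -> exists A, [/\ open A, A x & small_for U A].
Proof.
move=> hU; have [_ _ /(_ x)[mulVx _] hmul hinv] := hG.
have cvg_ldiv : (fun p : G * G => mul (inv p.1) p.2) @ (x, x) --> one.
  rewrite -mulVx; apply: (@continuous2_cvg _ _ _ _ _ _ _ _ mul).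
  - exact: (hmul (_, _)).
  - by apply: cvg_comp; [exact: cvg_fst | exact: hinv].
  - exact: cvg_snd.
have [[A B] /= [Ax Bx] AB_U] := cvg_ldiv U hU.
exists (A `&` B)°; split; first exact: open_interior.
- exact: nbhs_singleton (nbhs_interior (filterI Ax Bx)).
- by move=> a b /interior_subset[Aa _] /interior_subset[_ Bb]; exact: (AB_U (a, b)).
Qed.

Lemma compact_small_coloring U C : nbhs one U -> compact C ->
  exists n (p : G -> nat), (forall z, C z -> p z < n)%N /\
    (forall z z', C z -> C z' -> p z = p z' -> U (mul (inv z) z')).
Proof.
move=> hU cC; have : @compact (pointed_at one) C := cC.
rewrite compact_cover => {}cC.
have [||D' D'small cover_C] := cC _ [set A | open A /\ small_for U A] id.
- by move=> A [].
- by move=> z _; have [A [oA Az sA]] := small_open_nbhs z hU; exists A.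
pose p z := find (fun A : set G => `[< A z >]) D'.
have has_p z : C z -> has (fun A : set G => `[< A z >]) D'.
  by case/cover_C => A /= AD' Az; apply/hasP; exists A => //; exact/asboolP.
exists (size D'), p; split=> [z /has_p|z z' Cz Cz' pzz'].
  by rewrite has_find.
have /asboolP Az := nth_find set0 (has_p z Cz).
have /asboolP Az' := nth_find set0 (has_p z' Cz').
have pz_lt : (p z < size D')%N by rewrite -has_find; exact: has_p.
have /D'small/set_mem[_ smallA] := mem_nth set0 pz_lt.
by apply: smallA Az _; rewrite -/(p z) pzz'.
Qed.

Variables (H U : set G).
Hypotheses (hU : nbhs one U) (hpart : coset_partition mul H U).

Lemma coset_partition_eq m m' : H m -> H m' -> U (mul (inv m) m') -> m = m'.
Proof.
move=> Hm Hm' Umm'; have [x [_ x_unique]] := hpart m'.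
rewrite -(x_unique m) ?(x_unique m') //; split=> //.
- by exists one; [exact: nbhs_singleton | rewrite (mulg1 hgrp)].
- by exists (mul (inv m) m') => //; rewrite (mulKVg hgrp).
Qed.

Lemma approx_block_diag_cover p :
  exists2 l, H l & approx_block_diag mul inv H U l p.
Proof.
case: p => x y; have [i [[Hi xiU] _]] := hpart x.
have [j [[Hj yjU] _]] := hpart y.
have [l [[Hl ijlU] _]] := hpart (mul i (inv j)).
by exists l => //; exists i, j.
Qed.

Lemma uniformly_finite_translates C : compact C ->
  exists n, forall c (s : seq G), uniq s ->
    (forall m, m \in s -> H m /\ exists2 z, C z & m = mul c z) -> (size s <= n)%N.
Proof.
move=> cC; have [n [p [p_lt p_small]]] := compact_small_coloring hU cC.
exists n => c s us hs; pose q m := p (mul (inv c) m).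
have q_inj : {in s &, injective q}.
  move=> m m' /hs[Hm [z Cz em]] /hs[Hm' [z' Cz' em']].
  subst m m'; rewrite /q !(mulKg hgrp) => pzz'; apply: coset_partition_eq => //.
  by rewrite (invMg hgrp) -(mulgA hgrp) (mulKg hgrp); exact: p_small.
rewrite -(size_map q) -(size_iota 0 n); apply: uniq_leq_size.
  by rewrite map_inj_in_uniq.
by move=> _ /mapP[_ /hs[_ [z Cz ->]] ->]; rewrite mem_iota /q (mulKg hgrp) p_lt.
Qed.

Hypothesis hconj : forall h, H h -> [set mul (mul h u) (inv h) | u in U] = U.

Lemma conjg_by_mem h u : H h -> U u -> U (conjg_by mul inv h u).
Proof. by move=> Hh Uu; rewrite -(hconj Hh); exists u. Qed.

Lemma block_band_translate k l :
  approx_block_diag mul inv H U l `&` band_diag mul inv U k !=set0 ->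
  exists2 z, mul2div2 U z & k = mul l z.
Proof.
move=> [[x y] [[i [j [Hi Hj [u1 Uu1 e1] [u Uu ex] [v Uv ey]]]] [u0 Uu0 e0]]].
rewrite /= in ex ey e0; rewrite -ex -ey (mul_invE hgrp) -e1 in e0.
set a := conjg_by mul inv j u in e0; set b := conjg_by mul inv j v in e0.
exists (mul (mul (mul u1 a) (inv b)) (inv u0)).
  by apply: mem_mul2div2 => //; apply: conjg_by_mem.
by rewrite -[k](mulgK hgrp _ u0) e0 !(mulgA hgrp).
Qed.

Lemma band_block_translate k l :
  band_diag mul inv U k `&` approx_block_diag mul inv H U l !=set0 ->
  exists2 z, mul2div2 U z & l = mul k z.
Proof.
move=> [[x y] [[u0 Uu0 e0] [i [j [Hi Hj [u1 Uu1 e1] [u Uu ex] [v Uv ey]]]]]].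
rewrite /= in ex ey e0; rewrite -ex -ey (mul_invE hgrp) -e1 in e0.
set a := conjg_by mul inv j u in e0; set b := conjg_by mul inv j v in e0.
have e1' : mul l u1 = mul (mul (mul k u0) b) (inv a).
  by rewrite e0 (mulgKV hgrp) (mulgK hgrp).
exists (mul (mul (mul u0 b) (inv a)) (inv u1)).
  by apply: mem_mul2div2 => //; apply: conjg_by_mem.
by rewrite -[l](mulgK hgrp _ u1) e1' !(mulgA hgrp).
Qed.

End TopologicalGroup.

Theorem mainTheorem11 (G : topologicalType)
  (mul : G -> G -> G) (inv : G -> G) (one : G) (H U : set G) :
  is_locally_compact_group mul inv one ->
  discrete_subset H ->
  borel_measurable U ->
  relatively_compact U ->
  nbhs one U ->
  coset_partition mul H U ->
  (forall h, H h -> [set mul (mul h u) (inv h) | u in U] = U) ->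
  exists n : nat,
    (forall l, H l -> forall s : seq G, uniq s ->
       (forall k, k \in s ->
          H k /\ approx_block_diag mul inv H U l `&` band_diag mul inv U k !=set0) ->
       (size s <= n)%N) /\
    (forall k, H k ->
       (forall s : seq G, uniq s ->
         (forall l, l \in s ->
            H l /\ band_diag mul inv U k `&` approx_block_diag mul inv H U l !=set0) ->
         (size s <= n)%N) /\
       band_diag mul inv U k `<=`
         \bigcup_(l in [set l | H l /\
             band_diag mul inv U k `&` approx_block_diag mul inv H U l !=set0])
           approx_block_diag mul inv H U l).
Proof.
move=> [hG _ _] _ _ hrc hU hpart hconj.
have /(uniformly_finite_translates hG hU hpart)[n hn] := compact_mul2div2 hG hrc.
have sub_closure : mul2div2 mul inv U `<=` mul2div2 mul inv (closure U).
  exact/mul2div2S/subset_closure.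
exists n; split=> [l _ s us hs|k _]; last split=> [s us hs|p band_p].
- apply: (hn l s us) => k /hs[Hk /(block_band_translate hG hconj)[z Wz ez]].
  by split=> //; exists z => //; exact: sub_closure.
- apply: (hn k s us) => l /hs[Hl /(band_block_translate hG hconj)[z Wz ez]].
  by split=> //; exists z => //; exact: sub_closure.
- have [l Hl block_p] := approx_block_diag_cover inv hpart p.
  by exists l => //; split=> //; exists p.
Qed.
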